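(* Let $M$ be a finite monoid and let $J$ and $J'$ be two $\mathscr{J}$-classes of $M$ such that $A(J)=A(J')$. Then the relation $\theta_J\cup\theta_{J'}$ is a congruence of $M$.
   Context: Green's relations on $M$: $a\mathscr{H}b$ iff $Ma=Mb$ and $aM=bM$; $a\mathscr{J}b$ iff $MaM=MbM$. $J_a$ is the $\mathscr{J}$-class of $a$; $J_a\leqslant_{\mathscr{J}}J_b$ iff $MaM\subseteq MbM$, and $J_a<_{\mathscr{J}}J_b$ iff $J_a\leqslant_{\mathscr{J}}J_b$ and $J_a\neq J_b$. For a $\mathscr{J}$-class $J$, $A(J)=\{a\in M: J_a<_{\mathscr{J}}J\}$, and $\theta_J$ is the relation: $a\,\theta_J\,b$ iff $a=b$, or $a,b\in A(J)$, or $a,b\in J$ and $a\mathscr{H}b$. *)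

From mathcomp Require Import all_boot.
Set Implicit Arguments. Unset Strict Implicit. Unset Printing Implicit Defensive.

Section FinMonoid.
Variables (M : finType) (mul : M -> M -> M) (one : M).

Definition is_monoid : Prop :=
  associative mul /\ left_id one mul /\ right_id one mul.

Definition lideal (a : M) : {set M} := [set mul m a | m : M].
Definition rideal (a : M) : {set M} := [set mul a m | m : M].
Definition ideal (a : M) : {set M} := [set mul (mul m a) n | m : M, n : M].

Definition Hrel (a b : M) : Prop := lideal a = lideal b /\ rideal a = rideal b.
Definition Jrel (a b : M) : Prop := ideal a = ideal b.

Definition Jclass (a : M) : {set M} := [set b | ideal b == ideal a].
Definition is_Jclass (J : {set M}) : Prop := exists a, J = Jclass a.

Definition Jle (J1 J2 : {set M}) : Prop :=
  exists a b, J1 = Jclass a /\ J2 = Jclass b /\ ideal a \subset ideal b.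
Definition Jlt (J1 J2 : {set M}) : Prop := Jle J1 J2 /\ J1 <> J2.

Definition Aset (J : {set M}) : M -> Prop := fun a => Jlt (Jclass a) J.

Definition theta (J : {set M}) (a b : M) : Prop :=
  a = b \/ (Aset J a /\ Aset J b) \/ ((a \in J) /\ (b \in J) /\ Hrel a b).

Definition is_congruence (R : M -> M -> Prop) : Prop :=
  (forall a, R a a) /\ (forall a b, R a b -> R b a) /\
  (forall a b c, R a b -> R b c -> R a c) /\
  (forall a b c, R a b -> R (mul c a) (mul c b)) /\
  (forall a b c, R a b -> R (mul a c) (mul b c)).

End FinMonoid.

From mathcomp Require Import all_boot.
Set Implicit Arguments. Unset Strict Implicit. Unset Printing Implicit Defensive.

(* If a theta_J b with a, b in J (so a H b), then c a and c b are R-related,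
   hence J-related.  Either they fall strictly below J, into A(J),
   or c a stays in J; in the latter case stability of finite monoids gives
   M (c a) = M a, and likewise for b, so c a H c b.  Right multiplication is
   the same argument in the opposite monoid.  For the union, a chain
   a theta_J b theta_J' c crosses between the two relations only through
   A(J) = A(J'), which is disjoint from J and J', or through an element of
   J and J', which forces J = J'. *)

Section FiniteMonoid.
Variables (M : finType) (mul : M -> M -> M) (one : M).
Hypotheses (mulA : associative mul) (mul1m : left_id one mul)
  (mulm1 : right_id one mul).

Lemma ideal_refl a : a \in ideal mul a.
Proof. by apply/imset2P; exists one one; rewrite ?mul1m ?mulm1. Qed.

Lemma ideal_subset a b : a \in ideal mul b -> ideal mul a \subset ideal mul b.
Proof.
case/imset2P=> m n _ _ ->; apply/subsetP=> _ /imset2P[p q _ _ ->].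
by apply/imset2P; exists (mul p m) (mul n q); rewrite ?mulA.
Qed.

Lemma ideal_mull_subset c a : ideal mul (mul c a) \subset ideal mul a.
Proof. by apply: ideal_subset; apply/imset2P; exists c one; rewrite ?mulm1. Qed.

Lemma ideal_mulr_subset a c : ideal mul (mul a c) \subset ideal mul a.
Proof. by apply: ideal_subset; apply/imset2P; exists one c; rewrite ?mul1m. Qed.

Lemma rideal_mul c a : rideal mul (mul c a) = mul c @: rideal mul a.
Proof. by rewrite -imset_comp; apply: eq_imset => m /=; rewrite mulA. Qed.

Lemma ideal_eq_rideal a b : rideal mul a = rideal mul b -> ideal mul a = ideal mul b.
Proof.
have sub x y : rideal mul x = rideal mul y -> ideal mul x \subset ideal mul y.
  move=> Exy; have : x \in rideal mul y.
    by rewrite -Exy; apply/imsetP; exists one; rewrite ?mulm1.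
  by case/imsetP=> m _ ->; apply: ideal_mulr_subset.
by move=> Eab; apply/eqP; rewrite eqEsubset !sub.
Qed.

(* Stability of a finite monoid: from a = u (c a) v, right multiplication by
   v maps M (c a) onto M a, so the inclusion M (c a) \subset M a cannot be
   proper. *)
Lemma lideal_stable c a :
  ideal mul (mul c a) = ideal mul a -> lideal mul (mul c a) = lideal mul a.
Proof.
move=> Eca; have : a \in ideal mul (mul c a) by rewrite Eca ideal_refl.
case/imset2P=> u v _ _ Ea.
have sub_ca : lideal mul (mul c a) \subset lideal mul a.
  by apply/subsetP=> _ /imsetP[m _ ->]; apply/imsetP; exists (mul m c); rewrite ?mulA.
have sub_a : lideal mul a \subset mul^~ v @: lideal mul (mul c a).
  apply/subsetP=> _ /imsetP[m _ ->]; apply/imsetP.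
  by exists (mul (mul m u) (mul c a)); [apply: imset_f | rewrite {1}Ea !mulA].
apply/eqP; rewrite eqEcard sub_ca.
exact: leq_trans (subset_leq_card sub_a) (leq_imset_card _ _).
Qed.

Lemma JclassE a b : Jclass mul a = Jclass mul b <-> ideal mul a = ideal mul b.
Proof.
split=> [Eab | Eab]; last by apply/setP=> x; rewrite !inE Eab.
have : a \in Jclass mul a by rewrite inE.
by rewrite Eab inE => /eqP.
Qed.

Lemma AsetE q x : Aset mul (Jclass mul q) x <-> ideal mul x \proper ideal mul q.
Proof.
rewrite /Aset /Jlt /Jle properEneq; split.
  case=> -[y [z [/JclassE Exy [/JclassE Eqz sub_yz]]]] neq.
  rewrite Exy Eqz sub_yz andbT; apply/eqP=> Eyz.
  by apply: neq; apply/JclassE; rewrite Exy Eqz.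
case/andP=> /eqP neq sub_xq.
by split; [exists x, q | move/JclassE].
Qed.

Lemma Aset_subset q x y :
  ideal mul y \subset ideal mul x -> Aset mul (Jclass mul q) x ->
  Aset mul (Jclass mul q) y.
Proof. by move=> sub_yx /AsetE lt_xq; apply/AsetE; apply: sub_proper_trans lt_xq. Qed.

Lemma Jclass_notAset q x : x \in Jclass mul q -> ~ Aset mul (Jclass mul q) x.
Proof. by rewrite inE => /eqP Exq /AsetE; rewrite Exq properE subxx. Qed.

Lemma Jclass_or_Aset q x y :
  x \in Jclass mul q -> ideal mul y \subset ideal mul x ->
  y \in Jclass mul q \/ Aset mul (Jclass mul q) y.
Proof.
rewrite inE => /eqP Exq sub_yx.
have [Eyx | neq] := eqVneq (ideal mul y) (ideal mul x).
  by left; rewrite inE Eyx Exq.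
by right; apply/AsetE; rewrite -Exq properEneq neq.
Qed.

Lemma theta_mull q a b c :
  theta mul (Jclass mul q) a b -> theta mul (Jclass mul q) (mul c a) (mul c b).
Proof.
case=> [-> | [[Aa Ab] | [aJ [bJ [Lab Rab]]]]]; first by left.
  by right; left; split; apply: Aset_subset (ideal_mull_subset c _) _.
have Ic : ideal mul (mul c a) = ideal mul (mul c b).
  by apply: ideal_eq_rideal; rewrite !rideal_mul Rab.
have [caJ | caA] := Jclass_or_Aset aJ (ideal_mull_subset c a); last first.
  by right; left; split=> //; apply: Aset_subset caA; rewrite Ic.
have cbJ : mul c b \in Jclass mul q by move: caJ; rewrite !inE Ic.
have Ica : ideal mul (mul c a) = ideal mul a.
  by move: caJ aJ; rewrite !inE => /eqP-> /eqP->.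
have Icb : ideal mul (mul c b) = ideal mul b.
  by move: cbJ bJ; rewrite !inE => /eqP-> /eqP->.
right; right; do 2!split=> //; split; last by rewrite !rideal_mul Rab.
by rewrite !lideal_stable.
Qed.

Lemma theta_sym J a b : theta mul J a b -> theta mul J b a.
Proof.
by case=> [-> | [[? ?] | [? [? [? ?]]]]]; [left | right; left | right; right].
Qed.

Lemma theta_trans q q' a b c :
  (forall x, Aset mul (Jclass mul q) x <-> Aset mul (Jclass mul q') x) ->
  theta mul (Jclass mul q) a b -> theta mul (Jclass mul q') b c ->
  theta mul (Jclass mul q) a c \/ theta mul (Jclass mul q') a c.
Proof.
move=> AqE [-> | [[Aa Ab] | [aJ [bJ [Lab Rab]]]]]; first by right.
  case=> [<- | [[_ Ac] | [bJ' _]]]; first by left; right; left.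
    by left; right; left; split=> //; apply/AqE.
  by case: (Jclass_notAset bJ'); apply/AqE.
case=> [<- | [[Ab _] | [bJ' [cJ' [Lbc Rbc]]]]]; first by left; right; right.
  by case: (Jclass_notAset bJ); apply/AqE.
have Eqq' : Jclass mul q = Jclass mul q'.
  by apply/JclassE; move: bJ bJ'; rewrite !inE => /eqP<- /eqP.
left; right; right; split=> //; split; first by rewrite Eqq'.
by split; [rewrite Lab Lbc | rewrite Rab Rbc].
Qed.

End FiniteMonoid.

Section Duality.
Variables (M : finType) (mul : M -> M -> M) (one : M).
Hypotheses (mulA : associative mul) (mul1m : left_id one mul)
  (mulm1 : right_id one mul).
Local Notation mulop := (fun x y => mul y x).

(* [lideal mulop] and [rideal mulop] are convertible to [rideal mul] and
   [lideal mul], so [Hrel mulop] is [Hrel mul] with its conjuncts swapped. *)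

Lemma ideal_op a : ideal mulop a = ideal mul a.
Proof.
by apply/setP=> x; apply/imset2P/imset2P=> -[m n _ _ ->]; exists n m; rewrite //= mulA.
Qed.

Lemma Jclass_op a : Jclass mulop a = Jclass mul a.
Proof. by apply/setP=> x; rewrite !inE !ideal_op. Qed.

Lemma Aset_op J a : Aset mulop J a <-> Aset mul J a.
Proof.
rewrite /Aset /Jlt /Jle; split=> -[[x [y [E1 [E2 sub]]]] neq];
  by split; [exists x, y | ]; rewrite ?Jclass_op ?ideal_op in E1 E2 sub neq *.
Qed.

Lemma theta_op J a b : theta mulop J a b <-> theta mul J a b.
Proof.
by split=> -[-> | [[/Aset_op Aa /Aset_op Ab] | [aJ [bJ [Lab Rab]]]]];
  [left | right; left | right; right | left | right; left | right; right].
Qed.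

Lemma theta_mulr q a b c :
  theta mul (Jclass mul q) a b -> theta mul (Jclass mul q) (mul a c) (mul b c).
Proof.
have mulopA : associative mulop by move=> x y z; rewrite /= mulA.
move=> /theta_op; rewrite -Jclass_op => /(theta_mull mulopA mulm1 mul1m c).
by rewrite Jclass_op => /theta_op.
Qed.

End Duality.

Theorem lemma3p5 (M : finType) (mul : M -> M -> M) (one : M)
  (J J' : {set M}) :
  is_monoid mul one ->
  is_Jclass mul J -> is_Jclass mul J' ->
  (forall a, Aset mul J a <-> Aset mul J' a) ->
  is_congruence mul (fun a b => theta mul J a b \/ theta mul J' a b).
Proof.
case=> mulA [mul1m mulm1] [q ->] [q' ->] AqE.
have Aq'E x : Aset mul (Jclass mul q') x <-> Aset mul (Jclass mul q) x.
  exact: iff_sym.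
split; first by move=> a; left; left.
split; first by move=> a b [] /theta_sym; [left | right].
split.
  move=> a b c [] Hab [] Hbc.
  - by case: (theta_trans (fun=> iff_refl _) Hab Hbc) => ?; left.
  - exact: theta_trans AqE Hab Hbc.
  - by apply/or_comm; apply: theta_trans Aq'E Hab Hbc.
  - by case: (theta_trans (fun=> iff_refl _) Hab Hbc) => ?; right.
split=> a b c [] Hab; [left | right | left | right];
  by [apply: (theta_mull mulA mul1m mulm1) | apply: (theta_mulr mulA mul1m mulm1)].
Qed.
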